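(* Assume the standing setup below, and let $i$ be an integer with $0\le i\le s-2r+1$. Then, as subspaces of the space of linear forms over $\mathbb{F}_p$ in $x_1,\ldots,x_m$, \[ \Big\langle L_H : H\in \textstyle\bigcup_{j=i}^{i+2r-1}\mathbb{P}_j(X)\Big\rangle =\Big\langle L_H : H\in \textstyle\bigcup_{j=i}^{i+2r-1}\mathbb{P}_j(X)\Big\rangle+\Big\langle \sum_{H\in\mathbb{P}_{i+2r}(X),\,I\subseteq H} L_H : I\in \mathbb{P}_i(X)\Big\rangle, \] where $\langle S\rangle$ denotes the $\mathbb{F}_p$-span of $S$.
   Context: Standing setup: $p$ is a prime; $K=\{k_1,\ldots,k_r\}$ and $L=\{l_1,\ldots,l_s\}$ are disjoint subsets of $\{0,1,\ldots,p-1\}$; $\mathcal{A}=\{A_1,\ldots,A_m\}$ is a family of distinct subsets of $[n]$ with $|A_i|\pmod p\in K$ for all $i$ and $|A_i\cap A_j|\pmod p\in L$ for all $i\ne j$. Let $X=[n-1]$. Associate a variable $x_i$ to each $A_i$, and for each $I\subseteq X$ define the linear form over $\mathbb{F}_p$: $L_I=\sum_{i:\ I\subseteq A_i} x_i$. For $j\ge0$, $\mathbb{P}_j(X)$ is the set of $j$-element subsets of $X$. *)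

From HB Require Import structures.
From mathcomp Require Import all_boot all_order all_algebra.
Set Implicit Arguments. Unset Strict Implicit. Unset Printing Implicit Defensive.
Import GRing.Theory.
Local Open Scope ring_scope.

(* The ground set [n] = {1,..,n} is modelled by 'I_n = {0,..,n-1} (shift by 1).
   X = [n-1] = {1,..,n-1} is then {0,..,n-2}, i.e. the x : 'I_n with x < n-1. *)
Definition Xset (n : nat) : {set 'I_n} := [set x : 'I_n | (x < n.-1)%N].

Definition Pj (n j : nat) : {set {set 'I_n}} :=
  [set H : {set 'I_n} | (H \subset Xset n) && (#|H| == j)].

(* Union of P_j(X) for lo <= j < hi (exclusive upper bound, to avoid truncated subtraction). *)
Definition Prange (n lo hi : nat) : {set {set 'I_n}} :=
  [set H : {set 'I_n} | (H \subset Xset n) && (lo <= #|H| < hi)%N].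

(* The linear form L_I = sum_{k : I ⊆ A_k} x_k, as its coefficient row vector
   in F_p^m (coordinate k is the coefficient of x_k). *)
Definition Lform (p n m : nat) (A : 'I_m -> {set 'I_n}) (I : {set 'I_n})
  : 'rV['F_p]_m :=
  \row_(k < m) ((I \subset A k)%:R : 'F_p).

Definition spanL (p n m : nat) (A : 'I_m -> {set 'I_n}) (S : {set {set 'I_n}})
  : {vspace 'rV['F_p]_m} :=
  <<[seq Lform p A H | H <- enum S]>>%VS.

Definition spanSums (p n m : nat) (A : 'I_m -> {set 'I_n}) (i r : nat)
  : {vspace 'rV['F_p]_m} :=
  <<[seq (\sum_(H in Pj n (i + 2 * r)%N | J \subset H) Lform p A H)%R
      | J : {set 'I_n} <- enum (Pj n i)]>>%VS.

(* Coordinate k of the form sum_{H in P_(i+d)(X), J <= H} L_H is [J <= A_k] * C(y_k, d)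
   with y_k = |A_k :&: X| - i.  Since |A_k| mod p lies in K and A_k contains at most
   the one point of [n] outside X, every y_k is, mod p, a root of a fixed polynomial of
   degree 2r.  When 2r < p the binomial polynomials C(Y, j), j <= 2r, are a basis of the
   polynomials of degree <= 2r over F_p, so on these roots C(Y, 2r) is a fixed linear
   combination of the C(Y, j), j < 2r: the top sum is the same combination of lower
   sums.  Otherwise the hypotheses force r = s = 1 and i = 0, and the L_H with
   |H| <= 1 already span everything, since sum_{x in A_k} L_{x} is a nonzero multiple
   of the k-th unit vector modulo the all-ones form L_{}. *)

From HB Require Import structures.
From mathcomp Require Import all_boot all_order all_algebra.
From mathcomp Require Import ring zify.
Set Implicit Arguments. Unset Strict Implicit. Unset Printing Implicit Defensive.
Import GRing.Theory.
Local Open Scope ring_scope.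

Section FallingFactorial.
Variable R : pzRingType.

Definition ffactr (y : R) (j : nat) : R := \prod_(u < j) (y - u%:R).

Lemma ffactrS (y : R) j : ffactr y j.+1 = ffactr y j * (y - j%:R).
Proof. by rewrite /ffactr big_ord_recr. Qed.

Lemma ffactr_nat (y j : nat) : ffactr y%:R j = (y ^_ j)%:R.
Proof.
elim: j => [|j IHj]; first by rewrite /ffactr big_ord0.
rewrite ffactrS IHj ffactnSr natrM.
have [le_jy|lt_yj] := leqP j y; first by rewrite natrB.
by rewrite ffact_small // !mul0r.
Qed.

End FallingFactorial.

Section BinomialInterpolation.
Variable F : fieldType.

Lemma prod_subr_ffactr_expansion (ts : seq F) : exists c : nat -> F,
  [/\ c (size ts) = 1, forall j, (size ts < j)%N -> c j = 0 &
      forall y, \prod_(t <- ts) (y - t) = \sum_(j < (size ts).+1) c j * ffactr y j].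
Proof.
elim: ts => [|t ts [c [c1 c0 cE]]].
  exists (fun j => (j == 0)%:R); split=> [//|[]//|y].
  by rewrite big_nil big_ord1 /ffactr big_ord0 mulr1.
set d := size ts.
(* (y - t) * ffactr y j = ffactr y j.+1 + (j - t) * ffactr y j *)
exists (fun j => (if j is j'.+1 then c j' else 0) + (j%:R - t) * c j); split.
- by rewrite /= c1 c0 ?mulr0 ?addr0.
- by case=> [//|j] /= lt_dj; rewrite !c0 ?mulr0 ?addr0 // (ltn_trans _ lt_dj).
move=> y; rewrite big_cons cE.
under [RHS]eq_bigr do rewrite mulrDl.
rewrite big_split /= [X in _ = X + _]big_ord_recl /= mul0r add0r.
rewrite [X in _ = _ + X]big_ord_recr /= (c0 d.+1) // mulr0 mul0r addr0.
rewrite mulr_sumr -big_split /=; apply: eq_bigr => j _.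
rewrite /bump /= add0n ffactrS.
have -> : y - t = (y - j%:R) + (j%:R - t) by rewrite addrA subrK.
ring.
Qed.

Lemma binomial_interpolation (ts : seq F) : (size ts)`!%:R != 0 :> F ->
  exists c : nat -> F, forall y : nat, \prod_(t <- ts) (y%:R - t) = 0 ->
    'C(y, size ts)%:R = \sum_(j < size ts) c j * 'C(y, j)%:R.
Proof.
set d := size ts => fact_d_neq0.
have [e [e_d _ eE]] := prod_subr_ffactr_expansion ts.
exists (fun j => - e j * j`!%:R / d`!%:R) => y root_y.
apply: (mulIf fact_d_neq0); rewrite -natrM bin_ffact -ffactr_nat.
move/eqP: (eE y%:R); rewrite root_y big_ord_recr /= e_d mul1r.
rewrite eq_sym addr_eq0 -eqr_oppLR eq_sym.
move/eqP->; rewrite mulr_suml -sumrN; apply: eq_bigr => j _.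
by rewrite ffactr_nat -bin_ffact natrM [RHS]mulrAC divfK //; ring.
Qed.

End BinomialInterpolation.

Lemma Fp_fact_neq0 p d : prime p -> (d < p)%N -> (d`!%:R : 'F_p) != 0.
Proof.
move=> p_pr; rewrite -(dvdn_pcharf (pchar_Fp p_pr)).
elim: d => [|d IHd] lt_dp; first by rewrite Euclid_dvd1.
by rewrite factS Euclid_dvdM // negb_or IHd ?(ltn_trans _ lt_dp) // gtnNdvd.
Qed.

Lemma rV_vspace_full (F : fieldType) m (U : {vspace 'rV[F]_m}) (D : F)
    (v : 'rV[F]_m) :
  D != 0 -> const_mx 1 \in U -> (forall k, v 0 k * v 0 k = v 0 k) ->
  (forall k, D *: delta_mx 0 k - v 0 k *: v \in U) -> U = fullv.
Proof.
move=> D_neq0 U1 v_idem Udelta.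
have memU_scaleD w : D *: w \in U -> w \in U.
  by move=> Dw; rewrite -[w]scale1r -(mulVf D_neq0) -scalerA memvZ.
have sum_delta : \sum_k delta_mx 0 k = const_mx 1 :> 'rV[F]_m.
  by rewrite [RHS]row_sum_delta; apply: eq_bigr => k _; rewrite mxE scale1r.
have sum_v : (\sum_k v 0 k) *: v \in U.
  have : \sum_k (D *: delta_mx 0 k - v 0 k *: v) \in U by exact: memv_suml.
  rewrite sumrB -scaler_sumr sum_delta -scaler_suml => /(memvB (memvZ D U1)).
  by rewrite opprB addrC subrK.
(* D v = sum_k v_k (D e_k - v_k v) + sum_k v_k^2 v, and v_k^2 = v_k *)
have Uv : v \in U.
  apply: memU_scaleD; rewrite [X in D *: X]row_sum_delta scaler_sumr.
  rewrite (eq_bigr (fun k => v 0 k *: (D *: delta_mx 0 k - v 0 k *: v) + v 0 k *: v)).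
    by rewrite big_split memvD -?scaler_suml // memv_suml // => k _; rewrite memvZ.
  move=> k _; rewrite scalerBr [v 0 k *: (v 0 k *: v)]scalerA v_idem subrK.
  by rewrite !scalerA mulrC.
apply/eqP; rewrite eqEsubv subvf; apply/subvP => w _.
rewrite [w]row_sum_delta memv_suml // => k _; apply/memvZ/memU_scaleD.
by rewrite -[D *: _](subrK (v 0 k *: v)) memvD ?memvZ.
Qed.

Lemma big_setI_card_le1 (V : nmodType) (T : finType) (S B : {set T})
    (f : T -> V) :
  (#|S| <= 1)%N -> \sum_(x in B :&: S) f x = (\sum_(x in S) f x) *+ #|B :&: S|.
Proof.
rewrite leq_eqVlt ltnS leqn0 cards_eq0 => /orP[/cards1P[a ->]|/eqP ->].
  have [Ba|nBa] := boolP (a \in B).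
    by rewrite (setIidPr _) ?sub1set // big_set1 cards1.
  rewrite (_ : B :&: [set a] = set0) ?big_set0 ?cards0 //.
  by apply/eqP; rewrite setI_eq0 disjoint_sym disjoints1.
by rewrite setI0 big_set0 mul0rn.
Qed.

Section Supersets.
Variable n : nat.

Lemma card_setCX : (#|~: Xset n| <= 1)%N.
Proof.
apply/card_le1_eqP => x y; rewrite !inE -!leqNgt => le_x le_y.
by apply: val_inj; move: (ltn_ord x) (ltn_ord y) le_x le_y; rewrite /=; lia.
Qed.

Lemma card_supersets i d (I C : {set 'I_n}) :
  I \subset C :&: Xset n -> #|I| = i ->
  #|[set H | [&& H \in Pj n (i + d), I \subset H & H \subset C]]|
  = 'C(#|C :&: Xset n| - i, d).
Proof.
set B := C :&: Xset n => sub_IB card_I.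
have [sub_BC sub_BX] : B \subset C /\ B \subset Xset n by rewrite subsetIl subsetIr.
have -> : [set H | [&& H \in Pj n (i + d), I \subset H & H \subset C]]
    = (fun J => I :|: J) @: [set J : {set 'I_n} | (J \subset B :\: I) && (#|J| == d)].
  apply/setP => H; rewrite /Pj !inE; apply/idP/imsetP.
  - case/and3P => /andP[sub_HX /eqP card_H] sub_IH sub_HC.
    exists (H :\: I); last by rewrite -{1}(setID H I) (setIidPr sub_IH).
    rewrite inE setSD ?subsetI ?sub_HC //=.
    by rewrite cardsD (setIidPr sub_IH) card_H card_I addKn.
  - case=> J; rewrite inE => /andP[/subsetDP[sub_JB disj_JI] /eqP card_J] ->.
    rewrite !subUset !(subset_trans _ sub_BX) ?(subset_trans _ sub_BC) //=.
    rewrite subsetUl andbT.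
    rewrite cardsU card_I card_J (_ : I :&: J = set0) ?cards0 ?subn0 ?eqxx //.
    by apply/eqP; rewrite setI_eq0 disjoint_sym.
rewrite card_in_imset; first by rewrite cards_draws cardsD (setIidPr sub_IB) card_I.
move=> J1 J2; rewrite !inE => /andP[/subsetDP[_ disj1] _] /andP[/subsetDP[_ disj2] _].
move=> eq12.
rewrite -(setDidPl disj1) -(setDidPl disj2).
by move/(congr1 (fun X => X :\: I)): eq12; rewrite !setDUl setDv !set0U.
Qed.

End Supersets.

Section LinearForms.
Variables (p n m : nat) (A : 'I_m -> {set 'I_n}).
Hypothesis p_pr : prime p.
Local Notation L := (Lform p A).

Definition Lsupsum (J : {set 'I_n}) (q : nat) : 'rV['F_p]_m :=
  \sum_(H in Pj n q | J \subset H) L H.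

Lemma Lsupsum_entry i d (J : {set 'I_n}) k : J \subset Xset n -> #|J| = i ->
  Lsupsum J (i + d) 0 k = (J \subset A k)%:R * 'C(#|A k :&: Xset n| - i, d)%:R.
Proof.
move=> sub_JX card_J; rewrite summxE; under eq_bigr do rewrite mxE.
have [sub_JA|not_sub_JA] := boolP (J \subset A k); last first.
  rewrite mul0r big1 // => H /andP[_ sub_JH].
  have [/(subset_trans sub_JH)|//] := boolP (H \subset A k).
  by rewrite (negbTE not_sub_JA).
rewrite mul1r -(@card_supersets n i d J (A k)) ?subsetI ?sub_JA //.
rewrite -sum1_card natr_sum.
rewrite [RHS]big_mkcond [LHS]big_mkcond; apply: eq_bigr => H _.
by rewrite inE; case: (H \in _); case: (J \subset H); case: (H \subset A k).
Qed.

Lemma Lsupsum_interpolation i d (J : {set 'I_n}) (c : nat -> 'F_p) :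
  J \subset Xset n -> #|J| = i ->
  (forall k, J \subset A k -> let y := (#|A k :&: Xset n| - i)%N in
     'C(y, d)%:R = \sum_(j < d) c j * 'C(y, j)%:R) ->
  Lsupsum J (i + d) = \sum_(j < d) c j *: Lsupsum J (i + j).
Proof.
move=> sub_JX card_J interp; apply/rowP => k.
rewrite Lsupsum_entry // summxE; under eq_bigr do rewrite mxE Lsupsum_entry //.
have [sub_JA|_] := boolP (J \subset A k); last first.
  by rewrite mul0r big1 // => j _; rewrite mul0r mulr0.
by rewrite mul1r interp //; under eq_bigr do rewrite mul1r.
Qed.

Lemma Lform_mem_spanL (S : {set {set 'I_n}}) H : H \in S -> L H \in spanL p A S.
Proof. by move=> SH; apply/memv_span/map_f; rewrite mem_enum. Qed.

Lemma Lsupsum_mem_spanL lo hi q (J : {set 'I_n}) : (lo <= q < hi)%N ->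
  Lsupsum J q \in spanL p A (Prange n lo hi).
Proof.
move=> q_in; apply: memv_suml => H /andP[].
rewrite inE => /andP[sub_HX /eqP card_H] _.
by apply: Lform_mem_spanL; rewrite inE sub_HX card_H.
Qed.

Lemma sum_Lform_set1_entry (S : {set 'I_n}) k :
  (\sum_(x in S) L [set x]) 0 k = #|S :&: A k|%:R.
Proof.
rewrite summxE; under eq_bigr do rewrite mxE sub1set.
rewrite -sum1_card natr_sum big_mkcond [RHS]big_mkcond; apply: eq_bigr => x _.
by rewrite in_setI; case: (x \in S); case: (x \in A k).
Qed.

(* |A k| = |A k :&: X| + e with e <= 1 (only one point of [n] lies outside X),
   so y = |A k :&: X| - i is congruent mod p to t - i - e for some t in K. *)
Definition residue_shifts (K : {set 'I_p}) (i : nat) : seq 'F_p :=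
  [seq (nat_of_ord t)%:R - (i + e)%:R | t <- enum K, e <- iota 0 2].

Lemma size_residue_shifts (K : {set 'I_p}) i :
  size (residue_shifts K i) = (2 * #|K|)%N.
Proof. by rewrite size_allpairs size_iota cardE mulnC. Qed.

Lemma residue_shifts_root (K : {set 'I_p}) i k :
  (exists2 x : 'I_p, x \in K & nat_of_ord x = (#|A k| %% p)%N) ->
  (i <= #|A k :&: Xset n|)%N ->
  \prod_(t <- residue_shifts K i) ((#|A k :&: Xset n| - i)%:R - t) = 0.
Proof.
move=> [x Kx x_res] le_i; set e := #|A k :\: Xset n|.
have le_e1 : (e <= 1)%N.
  by apply: leq_trans (card_setCX n); rewrite subset_leq_card // setDE subsetIr.
have card_A : #|A k| = (#|A k :&: Xset n| - i + (i + e))%N.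
  by rewrite -(cardsID (Xset n)) addnA subnK.
apply/eqP; rewrite prodf_seq_eq0; apply/hasP; exists ((x : nat)%:R - (i + e)%:R).
  by apply: allpairs_f; rewrite ?mem_enum // mem_iota.
by rewrite x_res Fp_nat_mod // card_A natrD addrK subrr.
Qed.

Lemma Lsupsum_top_mem_spanL (K : {set 'I_p}) i J : (2 * #|K| < p)%N ->
  (forall k, exists2 x : 'I_p, x \in K & nat_of_ord x = (#|A k| %% p)%N) ->
  J \in Pj n i ->
  Lsupsum J (i + 2 * #|K|) \in spanL p A (Prange n i (i + 2 * #|K|)).
Proof.
move=> lt_2r_p resK; rewrite inE => /andP[sub_JX /eqP card_J].
have fact_neq0 : (size (residue_shifts K i))`!%:R != 0 :> 'F_p.
  by rewrite size_residue_shifts Fp_fact_neq0.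
have [c interp] := binomial_interpolation fact_neq0.
rewrite -(size_residue_shifts K i) (Lsupsum_interpolation (c := c)) //.
  apply: memv_suml => j _; apply/memvZ/Lsupsum_mem_spanL.
  by rewrite leq_addr ltn_add2l ltn_ord.
move=> k sub_JA; apply/interp/residue_shifts_root => //.
by rewrite -card_J subset_leq_card // subsetI sub_JA.
Qed.

Lemma Lform_set0 : L set0 = const_mx 1.
Proof. by apply/rowP => k; rewrite !mxE sub0set. Qed.

Lemma spanL_low_full (kk ll : 'I_p) : kk != ll ->
  (forall k, (#|A k| %% p)%N = kk) ->
  (forall k l, k != l -> (#|A k :&: A l| %% p)%N = ll) ->
  spanL p A (Prange n 0 2) = fullv.
Proof.
move=> kk_neq_ll card_res cap_res; set U := spanL _ _ _.
set D : 'F_p := kk%:R - ll%:R.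
have D_neq0 : D != 0.
  rewrite subr_eq0; apply: contraNneq kk_neq_ll => /(congr1 (@nat_of_ord _)).
  rewrite !val_Fp_nat // (modn_small (ltn_ord kk)) (modn_small (ltn_ord ll)).
  by move=> eq_kl; apply/eqP/val_inj.
have sum_A k : \sum_(x in A k) L [set x] = ll%:R *: const_mx 1 + D *: delta_mx 0 k.
  apply/rowP => l; rewrite sum_Lform_set1_entry !mxE eqxx mulr1 /=.
  have [<-|neq_kl] := eqVneq k l.
    by rewrite setIid -Fp_nat_mod // card_res mulr1 addrC subrK.
  by rewrite -Fp_nat_mod // cap_res // mulr0 addr0.
set v := \sum_(x in ~: Xset n) L [set x].
have v_entry k : v 0 k = #|A k :&: ~: Xset n|%:R by rewrite sum_Lform_set1_entry setIC.
have split_A k :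
    \sum_(x in A k) L [set x] = \sum_(x in A k :&: Xset n) L [set x] + v 0 k *: v.
  rewrite (big_setID (Xset n)) /= setDE (big_setI_card_le1 _ _ (card_setCX n)).
  by rewrite v_entry scaler_nat.
have U1 : const_mx 1 \in U.
  by rewrite -Lform_set0 Lform_mem_spanL // inE sub0set cards0.
apply: (rV_vspace_full (v := v) D_neq0 U1).
- move=> k; rewrite v_entry.
  have : (#|A k :&: ~: Xset n| <= 1)%N.
    exact: leq_trans (subset_leq_card (subsetIr _ _)) (card_setCX n).
  by case: #|_| => [|[|]] //; rewrite ?mul0r ?mulr1.
move=> k.
have -> : D *: delta_mx 0 k = \sum_(x in A k) L [set x] - ll%:R *: const_mx 1.
  by rewrite sum_A [_ + D *: _]addrC addrK.
rewrite split_A addrAC addrK memvB ?memvZ //.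
apply: memv_suml => x; rewrite inE => /andP[_ Xx].
by rewrite Lform_mem_spanL // inE sub1set Xx cards1.
Qed.

End LinearForms.

Theorem mainTheorem5 (p n m : nat) (K L : {set 'I_p})
  (A : 'I_m -> {set 'I_n}) (i : nat) :
  prime p ->
  [disjoint K & L] ->
  injective A ->
  (forall k : 'I_m, exists2 x : 'I_p, x \in K & nat_of_ord x = (#|A k| %% p)%N) ->
  (forall k l : 'I_m, k != l ->
     exists2 x : 'I_p, x \in L & nat_of_ord x = (#|A k :&: A l| %% p)%N) ->
  (i + 2 * #|K| <= #|L| + 1)%N ->
  spanL p A (Prange n i (i + 2 * #|K|))
  = (spanL p A (Prange n i (i + 2 * #|K|)) + spanSums p A i #|K|)%VS.
Proof.
(* injectivity of A already follows from the residue conditions *)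
move=> p_pr disjKL _ resK resL le_i.
apply/esym/addv_idPl/span_subvP => v /mapP[J]; rewrite mem_enum => PJ ->.
have [lt_2r_p|le_p_2r] := ltnP (2 * #|K|) p; first exact: Lsupsum_top_mem_spanL.
have le_rs_p : (#|K| + #|L| <= p)%N.
  have := (leq_card_setU K L).2; rewrite disjKL => /eqP <-.
  by rewrite -[X in (_ <= X)%N]card_ord max_card.
have p_gt1 := prime_gt1 p_pr.
have [r1 s1 i0] : [/\ #|K| = 1, #|L| = 1 & i = 0]%N by split; lia.
have [[kk K1] [ll L1]] := (cards1P (introT eqP r1), cards1P (introT eqP s1)).
rewrite r1 i0 (@spanL_low_full p n m A p_pr kk ll) ?memvf //.
- by apply: contraTneq disjKL => eq_kl; rewrite K1 L1 eq_kl disjoints1 inE negbK.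
- by move=> k; have [x] := resK k; rewrite K1 inE => /eqP <-.
- by move=> k l neq_kl; have [x] := resL k l neq_kl; rewrite L1 inE => /eqP <-.
Qed.
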